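(* Let $(P,u)\in\mathrm{Elt}(\mathrm{Pol}_\omega^* )$. Then $(P,u)$ is a polyplex if and only if $(P,1_u)$ is a polyplex.
   Context: An $\omega$-precategory is an $\omega$-globular set with identities $1_u$ and compositions $u\ast_iv$ satisfying the axioms of strict $\omega$-categories except the interchange law. An $\omega$-polygraph $P$ consists of sets $P_k$ of $k$-generators with globular sources/targets in the free precategory on lower generators; $P^*$ is its free $\omega$-precategory; $\mathrm{Pol}_\omega$ is the category of $\omega$-polygraphs and generator-wise morphisms $F$, inducing prefunctors $F^*$. $\mathrm{Elt}(\mathrm{Pol}_\omega^* )$ has objects $(P,u)$ with $u$ a cell of $P^*$ of any dimension and morphisms $(P,u)\to(Q,v)$ the polygraph morphisms $F$ with $F^*(u)=v$. An element $(P,u)$ is principal if every morphism into it whose underlying polygraph morphism is a monomorphism is an isomorphism; it is primitive if it is principal and every morphism $(Q,v)\to(P,u)$ with $(Q,v)$ principal is an isomorphism. A polyplex is a primitive element of $\mathrm{Elt}(\mathrm{Pol}_\omega^* )$. *)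

(* Free omega-precategories on omega-polygraphs,
   presented by syntax (terms) modulo the precategory axioms. *)
From Stdlib Require Import Arith.

Inductive term (G : nat -> Type) : Type :=
| gen (k : nat) (g : G k)
| tid (t : term G)
| tcomp (i : nat) (a b : term G).
Arguments gen {G} k g.
Arguments tid {G} t.
Arguments tcomp {G} i a b.

Fixpoint dim {G} (t : term G) : nat :=
  match t with
  | gen k _ => k
  | tid u => S (dim u)
  | tcomp _ a _ => dim a
  end.

Definition bnd (G : nat -> Type) := forall k, G (S k) -> term G.

(* boundary of a generator (junk value for 0-generators) *)
Definition gbound {G} (s : bnd G) (k : nat) : G k -> term G :=
  match k return G k -> term G with
  | 0 => fun g => gen 0 g
  | S k' => fun g => s k' g
  end.

Fixpoint tsrc {G} (s : bnd G) (t : term G) : term G :=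
  match t with
  | gen k g => gbound s k g
  | tid u => u
  | tcomp i a b =>
      if Nat.eqb (S i) (dim a) then tsrc s a
      else tcomp i (tsrc s a) (tsrc s b)
  end.

Fixpoint ttgt {G} (t : bnd G) (u : term G) : term G :=
  match u with
  | gen k g => gbound t k g
  | tid v => v
  | tcomp i a b =>
      if Nat.eqb (S i) (dim a) then ttgt t b
      else tcomp i (ttgt t a) (ttgt t b)
  end.

Definition src_at {G} (s : bnd G) (i : nat) (u : term G) : term G :=
  Nat.iter (dim u - i) (tsrc s) u.
Definition tgt_at {G} (t : bnd G) (i : nat) (u : term G) : term G :=
  Nat.iter (dim u - i) (ttgt t) u.
Definition idn {G} (n : nat) (u : term G) : term G := Nat.iter n tid u.

(** Well-formed terms (cells of the free precategory) and their equality: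
    the congruence generated by the axioms of omega-precategories, i.e. the
    axioms of strict omega-categories except the interchange law:
    associativity, unit laws, and 1_(a *_i b) = 1_a *_i 1_b. *)
Inductive wf (G : nat -> Type) (s t : bnd G) : term G -> Prop :=
| wf_gen k g : wf G s t (gen k g)
| wf_id u : wf G s t u -> wf G s t (tid u)
| wf_comp i a b :
    wf G s t a -> wf G s t b -> dim a = dim b -> i < dim a ->
    eqv G s t (tgt_at t i a) (src_at s i b) ->
    wf G s t (tcomp i a b)
with eqv (G : nat -> Type) (s t : bnd G) : term G -> term G -> Prop :=
| eqv_refl u : wf G s t u -> eqv G s t u u
| eqv_sym u v : eqv G s t u v -> eqv G s t v u
| eqv_trans u v w : eqv G s t u v -> eqv G s t v w -> eqv G s t u w
| eqv_id u v : eqv G s t u v -> eqv G s t (tid u) (tid v)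
| eqv_comp i a a' b b' :
    eqv G s t a a' -> eqv G s t b b' ->
    wf G s t (tcomp i a b) -> wf G s t (tcomp i a' b') ->
    eqv G s t (tcomp i a b) (tcomp i a' b')
| eqv_assoc i a b c :
    wf G s t (tcomp i (tcomp i a b) c) ->
    eqv G s t (tcomp i (tcomp i a b) c) (tcomp i a (tcomp i b c))
| eqv_unitl i a :
    wf G s t a -> i < dim a ->
    eqv G s t (tcomp i (idn (dim a - i) (src_at s i a)) a) a
| eqv_unitr i a :
    wf G s t a -> i < dim a ->
    eqv G s t (tcomp i a (idn (dim a - i) (tgt_at t i a))) a
| eqv_idcomp i a b :
    wf G s t (tcomp i a b) ->
    eqv G s t (tid (tcomp i a b)) (tcomp i (tid a) (tid b)).

(** omega-polygraphs: the source/target of a (k+1)-generator is a k-cell of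
    the free precategory (it only involves generators of dimension <= k),
    and globularity holds. *)
Record polygraph := Polygraph {
  gens : nat -> Type;
  psrc : bnd gens;
  ptgt : bnd gens;
  psrc_wf : forall k g, wf gens psrc ptgt (psrc k g) /\ dim (psrc k g) = k;
  ptgt_wf : forall k g, wf gens psrc ptgt (ptgt k g) /\ dim (ptgt k g) = k;
  pglob_s : forall k (g : gens (S (S k))),
      eqv gens psrc ptgt (tsrc psrc (psrc (S k) g)) (tsrc psrc (ptgt (S k) g));
  pglob_t : forall k (g : gens (S (S k))),
      eqv gens psrc ptgt (ttgt ptgt (psrc (S k) g)) (ttgt ptgt (ptgt (S k) g))
}.

Definition cell (P : polygraph) (u : term (gens P)) : Prop :=
  wf (gens P) (psrc P) (ptgt P) u.
Definition ceq (P : polygraph) (u v : term (gens P)) : Prop :=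
  eqv (gens P) (psrc P) (ptgt P) u v.

Fixpoint tmap {G H : nat -> Type} (f : forall k, G k -> H k) (u : term G)
  : term H :=
  match u with
  | gen k g => gen k (f k g)
  | tid v => tid (tmap f v)
  | tcomp i a b => tcomp i (tmap f a) (tmap f b)
  end.

Record pmorph (P Q : polygraph) := PMorph {
  pmap : forall k, gens P k -> gens Q k;
  pmap_src : forall k g, ceq Q (tmap pmap (psrc P k g)) (psrc Q k (pmap (S k) g));
  pmap_tgt : forall k g, ceq Q (tmap pmap (ptgt P k g)) (ptgt Q k (pmap (S k) g))
}.
Arguments pmap {P Q} _ k _.

(** Monomorphisms in Pol_omega (categorical definition; morphisms are
    equal when their generator maps agree). *)
Definition is_mono {P Q : polygraph} (F : pmorph P Q) : Prop :=
  forall (R : polygraph) (G1 G2 : pmorph R P),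
    (forall k x, pmap F k (pmap G1 k x) = pmap F k (pmap G2 k x)) ->
    forall k x, pmap G1 k x = pmap G2 k x.

Record elt := Elt {
  epol : polygraph;
  ecell : term (gens epol);
  ecell_wf : cell epol ecell
}.

Definition elt_hom (X Y : elt) (F : pmorph (epol X) (epol Y)) : Prop :=
  ceq (epol Y) (tmap (pmap F) (ecell X)) (ecell Y).

Definition elt_iso (X Y : elt) (F : pmorph (epol X) (epol Y)) : Prop :=
  exists G : pmorph (epol Y) (epol X),
    elt_hom Y X G /\
    (forall k x, pmap G k (pmap F k x) = x) /\
    (forall k y, pmap F k (pmap G k y) = y).

Definition principal (X : elt) : Prop :=
  forall (Y : elt) (F : pmorph (epol Y) (epol X)),
    elt_hom Y X F -> is_mono F -> elt_iso Y X F.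

Definition primitive (X : elt) : Prop :=
  principal X /\
  forall (Y : elt) (F : pmorph (epol Y) (epol X)),
    elt_hom Y X F -> principal Y -> elt_iso Y X F.

Definition polyplex (X : elt) : Prop := primitive X.

Definition elt_unit (X : elt) : elt :=
  Elt (epol X) (tid (ecell X)) (wf_id _ _ _ _ (ecell_wf X)).

(* A cell z whose image under a prefunctor F^* is an identity 1_v contains no
   generator outside an identity, since "built from identities alone" is preserved by
   the precategory axioms and reflected by F^*; hence z = 1_{s z}, where s is the
   source.  So morphisms (Q, z) -> (P, 1_u) are exactly the morphisms
   (Q, s z) -> (P, u), isomorphisms correspond under v |-> 1_v and z |-> s z, and
   principality and primitivity transfer between (P, u) and (P, 1_u).
   Underneath lie the facts that sources and targets of cells are cells, respect the
   equivalence and are globular, and that F^* preserves cells, boundaries and the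
   equivalence.  Since well-formedness of a composite refers to the equivalence of
   lower-dimensional boundaries, each of these pairs of facts is proved by induction
   on the dimension. *)

From Pilot Require Import Defs.
From Stdlib Require Import Arith Bool Lia.

Fixpoint is_identity {G} (x : term G) : bool :=
  match x with
  | gen _ _ => false
  | tid _ => true
  | tcomp _ a b => is_identity a && is_identity b
  end.

Lemma dim_tmap {G H} (f : forall k, G k -> H k) x : dim (tmap f x) = dim x.
Proof. induction x; cbn; auto. Qed.

Lemma tmap_idn {G H} (f : forall k, G k -> H k) k x : tmap f (idn k x) = idn k (tmap f x).
Proof.
  induction k as [|k IHk]; [reflexivity|]. unfold idn in *.
  rewrite !Nat.iter_succ. cbn [tmap]. congruence.
Qed.

Lemma is_identity_tmap {G H} (f : forall k, G k -> H k) x :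
  is_identity (tmap f x) = is_identity x.
Proof. induction x; cbn; congruence. Qed.

Section Terms.
Context {G : nat -> Type} (s t : bnd G).

Lemma dim_idn k (x : term G) : dim (idn k x) = k + dim x.
Proof. induction k; simpl; auto. Qed.

Lemma iter_tsrc_idn k x : Nat.iter k (tsrc s) (idn k x) = x.
Proof. induction k as [|k IHk]; [reflexivity|]. rewrite Nat.iter_succ_r. exact IHk. Qed.

Lemma iter_ttgt_idn k x : Nat.iter k (ttgt t) (idn k x) = x.
Proof. induction k as [|k IHk]; [reflexivity|]. rewrite Nat.iter_succ_r. exact IHk. Qed.

Lemma src_at_idn i k x : dim x = i -> src_at s i (idn k x) = x.
Proof.
  intros Hx. unfold src_at. rewrite dim_idn, Hx, Nat.add_sub. apply iter_tsrc_idn.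
Qed.

Lemma tgt_at_idn i k x : dim x = i -> tgt_at t i (idn k x) = x.
Proof.
  intros Hx. unfold tgt_at. rewrite dim_idn, Hx, Nat.add_sub. apply iter_ttgt_idn.
Qed.

Lemma src_at_dim x : src_at s (dim x) x = x.
Proof. unfold src_at. rewrite Nat.sub_diag. reflexivity. Qed.

Lemma src_at_tid i x : i <= dim x -> src_at s i (tid x) = src_at s i x.
Proof.
  intros Hi. unfold src_at. cbn [dim].
  rewrite Nat.sub_succ_l, Nat.iter_succ_r by exact Hi. reflexivity.
Qed.

Lemma tgt_at_tid i x : i <= dim x -> tgt_at t i (tid x) = tgt_at t i x.
Proof.
  intros Hi. unfold tgt_at. cbn [dim].
  rewrite Nat.sub_succ_l, Nat.iter_succ_r by exact Hi. reflexivity.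
Qed.

Lemma tsrc_idn k x : tsrc s (idn (S k) x) = idn k x.
Proof. reflexivity. Qed.

Lemma ttgt_idn k x : ttgt t (idn (S k) x) = idn k x.
Proof. reflexivity. Qed.

Lemma src_at_codim1 i x : S i = dim x -> src_at s i x = tsrc s x.
Proof. intros H. unfold src_at. rewrite <- H, Nat.sub_succ_l, Nat.sub_diag; auto. Qed.

Lemma tgt_at_codim1 i x : S i = dim x -> tgt_at t i x = ttgt t x.
Proof. intros H. unfold tgt_at. rewrite <- H, Nat.sub_succ_l, Nat.sub_diag; auto. Qed.

Lemma tsrc_tcomp_top i a b : S i = dim a -> tsrc s (tcomp i a b) = tsrc s a.
Proof. intros H. cbn [tsrc]. rewrite <- H, Nat.eqb_refl. reflexivity. Qed.

Lemma tsrc_tcomp_low i a b :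
  S i <> dim a -> tsrc s (tcomp i a b) = tcomp i (tsrc s a) (tsrc s b).
Proof. intros H. cbn [tsrc]. apply Nat.eqb_neq in H. rewrite H. reflexivity. Qed.

Lemma ttgt_tcomp_top i a b : S i = dim a -> ttgt t (tcomp i a b) = ttgt t b.
Proof. intros H. cbn [ttgt]. rewrite <- H, Nat.eqb_refl. reflexivity. Qed.

Lemma ttgt_tcomp_low i a b :
  S i <> dim a -> ttgt t (tcomp i a b) = tcomp i (ttgt t a) (ttgt t b).
Proof. intros H. cbn [ttgt]. apply Nat.eqb_neq in H. rewrite H. reflexivity. Qed.

End Terms.

(** * Boundaries of cells *)

Section Polygraph.
Context {P : polygraph}.
Local Notation Wf := (wf (gens P) (psrc P) (ptgt P)).
Local Notation Eqv := (eqv (gens P) (psrc P) (ptgt P)).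
Local Notation Src := (tsrc (psrc P)).
Local Notation Tgt := (ttgt (ptgt P)).
Local Notation src_at := (src_at (psrc P)).
Local Notation tgt_at := (tgt_at (ptgt P)).

Lemma dim_tsrc x : dim (Src x) = pred (dim x).
Proof.
  induction x as [[|k] g | u _ | i a IHa b _]; cbn [tsrc dim gbound]; auto.
  - apply (psrc_wf P k g).
  - destruct (Nat.eqb (S i) (dim a)); auto.
Qed.

(* Unlike [tsrc], [ttgt] reads a top composite off its second factor, whose
   dimension is only controlled for well-formed terms. *)
Lemma dim_ttgt x : Wf x -> dim (Tgt x) = pred (dim x).
Proof.
  induction 1 as [[|k] g | u _ _ | i a b _ IHa _ IHb Hab _ _]; cbn [ttgt dim gbound]; auto.
  - apply (ptgt_wf P k g).
  - destruct (Nat.eqb (S i) (dim a)); cbn [dim]; congruence.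
Qed.

Lemma dim_iter_tsrc k x : dim (Nat.iter k Src x) = dim x - k.
Proof. induction k; [cbn; lia|]. rewrite Nat.iter_succ, dim_tsrc, IHk. lia. Qed.

Lemma dim_src_at i x : i <= dim x -> dim (src_at i x) = i.
Proof. intros Hi. unfold Defs.src_at. rewrite dim_iter_tsrc. lia. Qed.

Lemma src_at_tsrc i x : i < dim x -> src_at i (Src x) = src_at i x.
Proof.
  intros Hi. unfold Defs.src_at. rewrite dim_tsrc.
  replace (dim x - i) with (S (pred (dim x) - i)) by lia.
  symmetry. apply Nat.iter_succ_r.
Qed.

Lemma tgt_at_ttgt i x : Wf x -> i < dim x -> tgt_at i (Tgt x) = tgt_at i x.
Proof.
  intros Hx Hi. unfold Defs.tgt_at. rewrite dim_ttgt by exact Hx.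
  replace (dim x - i) with (S (pred (dim x) - i)) by lia.
  symmetry. apply Nat.iter_succ_r.
Qed.

Lemma eqv_dim x y : Eqv x y -> dim x = dim y.
Proof.
  induction 1; cbn [dim]; try congruence.
  rewrite dim_idn, dim_src_at; lia.
Qed.

Lemma wf_tcomp_inv i a b : Wf (tcomp i a b) ->
  Wf a /\ Wf b /\ dim a = dim b /\ i < dim a /\ Eqv (tgt_at i a) (src_at i b).
Proof. inversion 1; auto. Qed.

Lemma idn_wf k x : Wf x -> Wf (idn k x).
Proof. intros Hx. induction k; cbn; auto using wf_id. Qed.

Lemma idn_eqv k x y : Eqv x y -> Eqv (idn k x) (idn k y).
Proof. intros Hxy. induction k; cbn; auto using eqv_id. Qed.

Lemma wf_unitl i y a : Wf y -> Wf a -> dim y = i -> i < dim a ->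
  Eqv y (src_at i a) -> Wf (tcomp i (idn (dim a - i) y) a).
Proof.
  intros Hy Ha Hdy Hi Hya. apply wf_comp; auto using idn_wf.
  - rewrite dim_idn. lia.
  - rewrite dim_idn. lia.
  - rewrite tgt_at_idn; auto.
Qed.

Lemma wf_unitr i y a : Wf y -> Wf a -> dim y = i -> i < dim a ->
  Eqv (tgt_at i a) y -> Wf (tcomp i a (idn (dim a - i) y)).
Proof.
  intros Hy Ha Hdy Hi Hay. apply wf_comp; auto using idn_wf.
  - rewrite dim_idn. lia.
  - rewrite src_at_idn; auto.
Qed.

Definition globular x := Wf (Src x) /\ Wf (Tgt x) /\
  (2 <= dim x -> Eqv (Src (Src x)) (Src (Tgt x)) /\ Eqv (Tgt (Src x)) (Tgt (Tgt x))).

Definition boundary_wf n := forall x, Wf x -> dim x = n -> globular x.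

Definition boundary_eqv n := forall x y, Eqv x y -> dim x = n ->
  Eqv (Src x) (Src y) /\ Eqv (Tgt x) (Tgt y).

Section BoundaryStep.
Variable n : nat.
Hypothesis IH : forall m, m < n -> boundary_wf m /\ boundary_eqv m.

Lemma globular_lt x : Wf x -> dim x < n -> globular x.
Proof. intros Hx Hn. exact (proj1 (IH _ Hn) x Hx eq_refl). Qed.

Lemma tsrc_eqv_lt x y : Eqv x y -> dim x < n -> Eqv (Src x) (Src y).
Proof. intros Hxy Hn. exact (proj1 (proj2 (IH _ Hn) x y Hxy eq_refl)). Qed.

Lemma ttgt_eqv_lt x y : Eqv x y -> dim x < n -> Eqv (Tgt x) (Tgt y).
Proof. intros Hxy Hn. exact (proj2 (proj2 (IH _ Hn) x y Hxy eq_refl)). Qed.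

Lemma src_at_wf_lt i x : Wf x -> dim x < n -> Wf (src_at i x).
Proof.
  intros Hx Hn. unfold Defs.src_at. induction (dim x - i) as [|k IHk]; [exact Hx|].
  rewrite Nat.iter_succ. apply globular_lt; [exact IHk|]. rewrite dim_iter_tsrc. lia.
Qed.

Lemma iter_ttgt_wf_lt k x : Wf x -> dim x < n ->
  Wf (Nat.iter k Tgt x) /\ dim (Nat.iter k Tgt x) = dim x - k.
Proof.
  intros Hx Hn. induction k as [|k [IHw IHd]]; [cbn; split; [exact Hx|lia]|].
  rewrite Nat.iter_succ. split.
  - apply globular_lt; [exact IHw|lia].
  - rewrite dim_ttgt, IHd by exact IHw. lia.
Qed.

Lemma tgt_at_wf_lt i x : Wf x -> dim x < n -> Wf (tgt_at i x).
Proof. intros Hx Hn. apply iter_ttgt_wf_lt; assumption. Qed.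

Lemma dim_tgt_at_lt i x : Wf x -> dim x < n -> i <= dim x -> dim (tgt_at i x) = i.
Proof.
  intros Hx Hn Hi. unfold Defs.tgt_at. rewrite (proj2 (iter_ttgt_wf_lt _ x Hx Hn)). lia.
Qed.

Lemma src_at_eqv_lt i x y : Eqv x y -> dim x < n -> Eqv (src_at i x) (src_at i y).
Proof.
  intros Hxy Hn. unfold Defs.src_at. rewrite <- (eqv_dim _ _ Hxy).
  induction (dim x - i) as [|k IHk]; [exact Hxy|].
  rewrite !Nat.iter_succ. apply tsrc_eqv_lt; [exact IHk|]. rewrite dim_iter_tsrc. lia.
Qed.

Lemma tgt_at_eqv_lt i x y : Wf x -> Eqv x y -> dim x < n ->
  Eqv (tgt_at i x) (tgt_at i y).
Proof.
  intros Hx Hxy Hn. unfold Defs.tgt_at. rewrite <- (eqv_dim _ _ Hxy).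
  induction (dim x - i) as [|k IHk]; [exact Hxy|].
  rewrite !Nat.iter_succ. apply ttgt_eqv_lt; [exact IHk|].
  rewrite (proj2 (iter_ttgt_wf_lt k x Hx Hn)). lia.
Qed.

Lemma src_at_ttgt_eqv i x : Wf x -> globular x -> dim x = n -> S i < n ->
  Eqv (src_at i (Tgt x)) (src_at i x).
Proof.
  intros Hx (_ & _ & Gx) Hn Hi.
  rewrite <- (src_at_tsrc i x), <- (src_at_tsrc i (Src x)), <- (src_at_tsrc i (Tgt x))
    by (rewrite ?dim_tsrc, ?dim_ttgt; auto; lia).
  apply src_at_eqv_lt; [apply eqv_sym, Gx; lia|].
  rewrite dim_tsrc, dim_ttgt by exact Hx. lia.
Qed.

Lemma tgt_at_tsrc_eqv i x : Wf x -> globular x -> dim x = n -> S i < n ->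
  Eqv (tgt_at i (Src x)) (tgt_at i x).
Proof.
  intros Hx (Sx & Tx & Gx) Hn Hi.
  rewrite <- (tgt_at_ttgt i x), <- (tgt_at_ttgt i (Tgt x)), <- (tgt_at_ttgt i (Src x))
    by (rewrite ?dim_tsrc, ?dim_ttgt; auto; lia).
  apply tgt_at_eqv_lt; [|apply Gx; lia|].
  - apply globular_lt; [exact Sx|]. rewrite dim_tsrc. lia.
  - rewrite dim_ttgt, dim_tsrc by exact Sx. lia.
Qed.

Section Composite.
Variables (i : nat) (a b : term (gens P)).
Hypotheses (Ha : Wf a) (Hb : Wf b) (Hda : dim a = n) (Hdb : dim b = n) (Hi : i < n).
Hypotheses (Hab : Eqv (tgt_at i a) (src_at i b)) (Ga : globular a) (Gb : globular b).

Lemma tsrc_tcomp_wf : Wf (Src (tcomp i a b)).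
Proof.
  destruct (Nat.eq_dec (S i) n) as [E|E].
  - rewrite tsrc_tcomp_top by lia. apply Ga.
  - rewrite tsrc_tcomp_low by lia. apply wf_comp; [apply Ga|apply Gb| | |].
    + rewrite !dim_tsrc. lia.
    + rewrite dim_tsrc. lia.
    + rewrite src_at_tsrc by lia.
      eapply eqv_trans; [apply tgt_at_tsrc_eqv; auto; lia|exact Hab].
Qed.

Lemma ttgt_tcomp_wf : Wf (Tgt (tcomp i a b)).
Proof.
  destruct (Nat.eq_dec (S i) n) as [E|E].
  - rewrite ttgt_tcomp_top by lia. apply Gb.
  - rewrite ttgt_tcomp_low by lia. apply wf_comp; [apply Ga|apply Gb| | |].
    + rewrite !dim_ttgt by assumption. lia.
    + rewrite dim_ttgt by assumption. lia.
    + rewrite tgt_at_ttgt by (auto; lia).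
      eapply eqv_trans; [exact Hab|apply eqv_sym, src_at_ttgt_eqv; auto; lia].
Qed.

Lemma tcomp_globular : globular (tcomp i a b).
Proof.
  split; [exact tsrc_tcomp_wf|split; [exact ttgt_tcomp_wf|]]. cbn [dim]. intros H2.
  destruct Ga as (_ & _ & Ga'), Gb as (_ & _ & Gb').
  destruct (Ga' ltac:(lia)) as [Ga1 Ga2], (Gb' ltac:(lia)) as [Gb1 Gb2].
  destruct (Nat.eq_dec (S i) n) as [E1|E1]; [|destruct (Nat.eq_dec (S (S i)) n) as [E2|E2]].
  - rewrite tsrc_tcomp_top, ttgt_tcomp_top by lia.
    rewrite tgt_at_codim1, src_at_codim1 in Hab by lia.
    assert (Hd : dim (Tgt a) < n) by (rewrite dim_ttgt; auto; lia).
    split.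
    + eapply eqv_trans; [exact Ga1|].
      eapply eqv_trans; [exact (tsrc_eqv_lt _ _ Hab Hd)|exact Gb1].
    + eapply eqv_trans; [exact Ga2|].
      eapply eqv_trans; [exact (ttgt_eqv_lt _ _ Hab Hd)|exact Gb2].
  - rewrite tsrc_tcomp_low, ttgt_tcomp_low by lia.
    rewrite tsrc_tcomp_top, ttgt_tcomp_top by (rewrite ?dim_tsrc, ?dim_ttgt; auto; lia).
    rewrite tsrc_tcomp_top, ttgt_tcomp_top by (rewrite ?dim_tsrc, ?dim_ttgt; auto; lia).
    auto.
  - assert (Hw : Wf (tcomp i a b)) by (apply wf_comp; auto; lia).
    assert (GS := globular_lt _ tsrc_tcomp_wf ltac:(rewrite dim_tsrc; cbn; lia)).
    assert (GT := globular_lt _ ttgt_tcomp_wf ltac:(rewrite dim_ttgt by exact Hw; cbn; lia)).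
    rewrite tsrc_tcomp_low in GS |- * by lia. rewrite ttgt_tcomp_low in GT |- * by lia.
    destruct GS as (WSS & WTS & _), GT as (WST & WTT & _).
    rewrite !tsrc_tcomp_low, !ttgt_tcomp_low in * by (rewrite ?dim_tsrc, ?dim_ttgt; auto; lia).
    split; apply eqv_comp; assumption.
Qed.

End Composite.

Lemma boundary_wf_step : boundary_wf n.
Proof.
  intros x Hx. induction Hx as [[|[|k]] g | u Hu _ | i a b Ha IHa Hb IHb Hab Hi He];
    intros Hn; cbn [dim] in Hn.
  - split; [constructor|split; [constructor|cbn; lia]].
  - split; [apply psrc_wf|split; [apply ptgt_wf|cbn; lia]].
  - split; [apply psrc_wf|split; [apply ptgt_wf|]].
    intros _. split; [apply pglob_s|apply pglob_t].
  - destruct (globular_lt u Hu ltac:(lia)) as (Su & Tu & _).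
    split; [exact Hu|split; [exact Hu|]]. intros _. split; apply eqv_refl; assumption.
  - apply tcomp_globular; auto; [lia|lia|apply IHb; lia].
Qed.

Lemma boundary_eqv_assoc i a b c : Wf (tcomp i (tcomp i a b) c) -> dim a = n ->
  Eqv (Src (tcomp i (tcomp i a b) c)) (Src (tcomp i a (tcomp i b c))) /\
  Eqv (Tgt (tcomp i (tcomp i a b) c)) (Tgt (tcomp i a (tcomp i b c))).
Proof.
  intros Hw Hn.
  destruct (wf_tcomp_inv _ _ _ Hw) as (Hab & _ & Hd & _).
  destruct (wf_tcomp_inv _ _ _ Hab) as (_ & _ & Hd' & _). cbn [dim] in Hd.
  destruct (boundary_wf_step _ Hw Hn) as (WS & WT & _).
  destruct (Nat.eq_dec (S i) (dim a)).
  - rewrite !tsrc_tcomp_top, !ttgt_tcomp_top in * by (cbn; lia).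
    split; apply eqv_refl; assumption.
  - rewrite !tsrc_tcomp_low, !ttgt_tcomp_low in * by (cbn; lia).
    split; apply eqv_assoc; assumption.
Qed.

Lemma boundary_eqv_unitl i a : Wf a -> i < dim a -> dim a = n ->
  Eqv (Src (tcomp i (idn (dim a - i) (src_at i a)) a)) (Src a) /\
  Eqv (Tgt (tcomp i (idn (dim a - i) (src_at i a)) a)) (Tgt a).
Proof.
  intros Ha Hi Hn. destruct (boundary_wf_step a Ha Hn) as (Sa & Ta & _).
  destruct (Nat.eq_dec (S i) (dim a)) as [E|E].
  - replace (dim a - i) with 1 by lia.
    rewrite tsrc_tcomp_top, ttgt_tcomp_top, tsrc_idn, src_at_codim1
      by (rewrite ?dim_idn, ?dim_src_at; lia).
    split; apply eqv_refl; assumption.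
  - assert (Hk : dim a - i = S (dim (Tgt a) - i)) by (rewrite dim_ttgt; auto; lia).
    assert (Hx : src_at i (Src a) = src_at i a) by (apply src_at_tsrc; lia).
    rewrite Hk, tsrc_tcomp_low, ttgt_tcomp_low, tsrc_idn, ttgt_idn
      by (rewrite ?dim_idn, ?dim_src_at; lia).
    split.
    + replace (dim (Tgt a) - i) with (dim (Src a) - i) by (rewrite dim_tsrc, dim_ttgt; auto).
      rewrite <- Hx. apply eqv_unitl; [exact Sa|rewrite dim_tsrc; lia].
    + eapply eqv_trans; [|apply (eqv_unitl _ _ _ i); [exact Ta|rewrite dim_ttgt; auto; lia]].
      assert (Wx : Wf (src_at i a))
        by (rewrite <- Hx; apply src_at_wf_lt; [|rewrite dim_tsrc]; auto; lia).
      assert (Wy : Wf (src_at i (Tgt a)))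
        by (apply src_at_wf_lt; [|rewrite dim_ttgt]; auto; lia).
      assert (Ex : Eqv (src_at i (Tgt a)) (src_at i a))
        by (apply src_at_ttgt_eqv; [exact Ha|exact (boundary_wf_step a Ha Hn)|exact Hn|lia]).
      apply eqv_comp; [apply idn_eqv, eqv_sym, Ex|apply eqv_refl, Ta| |];
        apply wf_unitl; rewrite ?dim_src_at, ?dim_ttgt; auto using eqv_refl, eqv_sym; lia.
Qed.

Lemma boundary_eqv_unitr i a : Wf a -> i < dim a -> dim a = n ->
  Eqv (Src (tcomp i a (idn (dim a - i) (tgt_at i a)))) (Src a) /\
  Eqv (Tgt (tcomp i a (idn (dim a - i) (tgt_at i a)))) (Tgt a).
Proof.
  intros Ha Hi Hn. destruct (boundary_wf_step a Ha Hn) as (Sa & Ta & _).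
  destruct (Nat.eq_dec (S i) (dim a)) as [E|E].
  - replace (dim a - i) with 1 by lia.
    rewrite tsrc_tcomp_top, ttgt_tcomp_top, ttgt_idn, tgt_at_codim1 by lia.
    split; apply eqv_refl; assumption.
  - assert (Hk : dim a - i = S (dim (Src a) - i)) by (rewrite dim_tsrc; lia).
    assert (Hx : tgt_at i (Tgt a) = tgt_at i a) by (apply tgt_at_ttgt; auto; lia).
    rewrite Hk, tsrc_tcomp_low, ttgt_tcomp_low, tsrc_idn, ttgt_idn by lia.
    split.
    + eapply eqv_trans; [|apply (eqv_unitr _ _ _ i); [exact Sa|rewrite dim_tsrc; lia]].
      assert (Wx : Wf (tgt_at i a))
        by (rewrite <- Hx; apply tgt_at_wf_lt; [|rewrite dim_ttgt]; auto; lia).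
      assert (Dx : dim (tgt_at i a) = i)
        by (rewrite <- Hx; apply dim_tgt_at_lt; rewrite ?dim_ttgt; auto; lia).
      assert (Wy : Wf (tgt_at i (Src a)))
        by (apply tgt_at_wf_lt; [|rewrite dim_tsrc]; auto; lia).
      assert (Dy : dim (tgt_at i (Src a)) = i)
        by (apply dim_tgt_at_lt; rewrite ?dim_tsrc; auto; lia).
      assert (Ex : Eqv (tgt_at i (Src a)) (tgt_at i a))
        by (apply tgt_at_tsrc_eqv; [exact Ha|exact (boundary_wf_step a Ha Hn)|exact Hn|lia]).
      apply eqv_comp; [apply eqv_refl, Sa|apply idn_eqv, eqv_sym, Ex| |];
        apply wf_unitr; rewrite ?dim_tsrc; auto using eqv_refl; lia.
    + replace (dim (Src a) - i) with (dim (Tgt a) - i) by (rewrite dim_tsrc, dim_ttgt; auto).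
      rewrite <- Hx. apply eqv_unitr; [exact Ta|rewrite dim_ttgt; auto; lia].
Qed.

Lemma boundary_eqv_step : boundary_eqv n.
Proof.
  intros x y Hxy.
  induction Hxy as [u Hu|u v Huv IH1|u v w Huv IH1 _ IH2|u v Huv|
    i a a' b b' Haa' IHa _ IHb Hl Hr|i a b c Hw|i a Ha Hi|i a Ha Hi|i a b Hw];
    intros Hn; cbn [dim] in Hn.
  - destruct (boundary_wf_step u Hu Hn) as (Su & Tu & _). split; apply eqv_refl; assumption.
  - rewrite <- (eqv_dim _ _ Huv) in Hn.
    destruct (IH1 Hn). split; apply eqv_sym; assumption.
  - destruct (IH1 Hn). rewrite (eqv_dim _ _ Huv) in Hn.
    destruct (IH2 Hn). split; eapply eqv_trans; eassumption.
  - split; exact Huv.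
  - destruct (wf_tcomp_inv _ _ _ Hl) as (_ & _ & Hd & _).
    assert (Hd' := eqv_dim _ _ Haa').
    destruct (IHa Hn), (IHb ltac:(lia)).
    destruct (boundary_wf_step _ Hl Hn) as (WSl & WTl & _).
    destruct (boundary_wf_step _ Hr ltac:(cbn; lia)) as (WSr & WTr & _).
    destruct (Nat.eq_dec (S i) (dim a)).
    + rewrite !tsrc_tcomp_top, !ttgt_tcomp_top by lia. split; assumption.
    + rewrite !tsrc_tcomp_low, !ttgt_tcomp_low in * by lia.
      split; apply eqv_comp; assumption.
  - apply boundary_eqv_assoc; assumption.
  - rewrite dim_idn, dim_src_at in Hn by lia. apply boundary_eqv_unitl; auto; lia.
  - apply boundary_eqv_unitr; assumption.
  - destruct (wf_tcomp_inv _ _ _ Hw) as (_ & _ & _ & Hi & _).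
    rewrite tsrc_tcomp_low, ttgt_tcomp_low by (cbn; lia).
    split; apply eqv_refl; exact Hw.
Qed.

End BoundaryStep.

Lemma boundary_wf_eqv n : boundary_wf n /\ boundary_eqv n.
Proof.
  induction n as [n IH] using lt_wf_ind.
  split; [apply boundary_wf_step|apply boundary_eqv_step]; exact IH.
Qed.

Lemma tsrc_wf x : Wf x -> Wf (Src x).
Proof. intros Hx. apply (proj1 (boundary_wf_eqv _) x Hx eq_refl). Qed.

Lemma ttgt_wf x : Wf x -> Wf (Tgt x).
Proof. intros Hx. apply (proj1 (boundary_wf_eqv _) x Hx eq_refl). Qed.

Lemma tsrc_eqv x y : Eqv x y -> Eqv (Src x) (Src y).
Proof. intros Hxy. apply (proj2 (boundary_wf_eqv _) x y Hxy eq_refl). Qed.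

Lemma ttgt_eqv x y : Eqv x y -> Eqv (Tgt x) (Tgt y).
Proof. intros Hxy. apply (proj2 (boundary_wf_eqv _) x y Hxy eq_refl). Qed.

Lemma is_identity_eqv x y : Eqv x y -> is_identity x = is_identity y.
Proof.
  induction 1; cbn [is_identity]; try congruence; try reflexivity.
  - symmetry. apply andb_assoc.
  - destruct (dim a - i) eqn:E; [lia|reflexivity].
  - destruct (dim a - i) eqn:E; [lia|apply andb_true_r].
Qed.

Lemma eqv_tid_tsrc x : Wf x -> is_identity x = true -> Eqv x (tid (Src x)).
Proof.
  induction 1 as [k g|u Hu _|i a b Ha IHa Hb IHb Hd Hi He]; cbn [is_identity]; intros Hid.
  - discriminate.
  - apply eqv_refl, wf_id, Hu.
  - apply andb_prop in Hid as [Ia Ib]. specialize (IHa Ia). specialize (IHb Ib).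
    assert (Sa := tsrc_wf a Ha). assert (Sb := tsrc_wf b Hb).
    assert (Hw : Wf (tcomp i a b)) by (apply wf_comp; assumption).
    destruct (Nat.eq_dec (S i) (dim a)) as [E|E].
    + rewrite tsrc_tcomp_top by exact E.
      rewrite tgt_at_codim1, src_at_codim1 in He by lia.
      assert (Di : dim (Src a) = i) by (rewrite dim_tsrc; lia).
      assert (Hk : dim (tid (Src a)) - i = 1) by (cbn [dim]; lia).
      assert (Hs : src_at i (tid (Src a)) = Src a)
        by (rewrite src_at_tid, <- Di at 1 by lia; apply src_at_dim).
      assert (Wu := wf_unitl i (Src a) (tid (Src a))).
      assert (U := eqv_unitl _ _ _ i (tid (Src a)) (wf_id _ _ _ _ Sa)).
      rewrite Hk, Hs in Wu, U. cbn [dim] in Wu, U.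
      (* [1 *_i 1 = 1] is the left unit law at the identity itself *)
      eapply eqv_trans; [apply eqv_comp; [exact IHa| |exact Hw|]|apply U; lia].
      * eapply eqv_trans; [exact IHb|apply eqv_id].
        eapply eqv_trans; [apply eqv_sym, He|exact (ttgt_eqv _ _ IHa)].
      * apply Wu; auto using wf_id, eqv_refl; lia.
    + rewrite tsrc_tcomp_low by exact E.
      assert (WS := tsrc_wf _ Hw). rewrite tsrc_tcomp_low in WS by exact E.
      destruct (wf_tcomp_inv _ _ _ WS) as (_ & _ & Hd' & Hi' & He').
      eapply eqv_trans; [apply eqv_comp; [exact IHa|exact IHb|exact Hw|]|].
      * apply wf_comp; try apply wf_id; cbn [dim]; try assumption; try lia.
        rewrite tgt_at_tid, src_at_tid by lia. exact He'.
      * apply eqv_sym, eqv_idcomp, WS.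
Qed.

Lemma iter_tsrc_wf k x : Wf x -> Wf (Nat.iter k Src x).
Proof. intros Hx. induction k; [exact Hx|rewrite Nat.iter_succ; apply tsrc_wf, IHk]. Qed.

Lemma iter_ttgt_wf k x : Wf x ->
  Wf (Nat.iter k Tgt x) /\ dim (Nat.iter k Tgt x) = dim x - k.
Proof.
  intros Hx.
  apply (iter_ttgt_wf_lt (S (dim x))); [intros m _; apply boundary_wf_eqv|exact Hx|lia].
Qed.

Lemma dim_tgt_at i x : Wf x -> i <= dim x -> dim (tgt_at i x) = i.
Proof.
  intros Hx Hi.
  apply (dim_tgt_at_lt (S (dim x))); [intros m _; apply boundary_wf_eqv|exact Hx|lia|exact Hi].
Qed.

Lemma src_at_eqv i x y : Eqv x y -> Eqv (src_at i x) (src_at i y).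
Proof.
  intros Hxy. apply (src_at_eqv_lt (S (dim x))); [intros m _; apply boundary_wf_eqv|exact Hxy|lia].
Qed.

Lemma tgt_at_eqv i x y : Wf x -> Eqv x y -> Eqv (tgt_at i x) (tgt_at i y).
Proof.
  intros Hx Hxy.
  apply (tgt_at_eqv_lt (S (dim x))); [intros m _; apply boundary_wf_eqv|exact Hx|exact Hxy|lia].
Qed.

End Polygraph.

(** * Functoriality of F^* *)

Section Morphism.
Context {P Q : polygraph} (F : pmorph P Q).
Local Notation f := (tmap (pmap F)).
Local Notation WfP := (wf (gens P) (psrc P) (ptgt P)).
Local Notation EqvP := (eqv (gens P) (psrc P) (ptgt P)).
Local Notation SrcP := (tsrc (psrc P)).
Local Notation TgtP := (ttgt (ptgt P)).
Local Notation WfQ := (wf (gens Q) (psrc Q) (ptgt Q)).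
Local Notation EqvQ := (eqv (gens Q) (psrc Q) (ptgt Q)).
Local Notation SrcQ := (tsrc (psrc Q)).
Local Notation TgtQ := (ttgt (ptgt Q)).

Definition tmap_wf_at n := forall x, WfP x -> dim x = n ->
  WfQ (f x) /\ EqvQ (f (SrcP x)) (SrcQ (f x)) /\ EqvQ (f (TgtP x)) (TgtQ (f x)).

Definition tmap_eqv_at n := forall x y, EqvP x y -> dim x = n -> EqvQ (f x) (f y).

Section MorphismStep.
Variable n : nat.
Hypothesis IH : forall m, m < n -> tmap_wf_at m /\ tmap_eqv_at m.

Lemma tmap_wf_lt x : WfP x -> dim x < n -> WfQ (f x).
Proof. intros Hx Hn. exact (proj1 (proj1 (IH _ Hn) x Hx eq_refl)). Qed.

Lemma tmap_eqv_lt x y : EqvP x y -> dim x < n -> EqvQ (f x) (f y).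
Proof. intros Hxy Hn. exact (proj2 (IH _ Hn) x y Hxy eq_refl). Qed.

Lemma tmap_src_at_lt i x : WfP x -> dim x < n ->
  EqvQ (f (src_at (psrc P) i x)) (src_at (psrc Q) i (f x)).
Proof.
  intros Hx Hn. unfold src_at. rewrite dim_tmap.
  induction (dim x - i) as [|k IHk]; [apply eqv_refl, tmap_wf_lt; assumption|].
  rewrite !Nat.iter_succ. eapply eqv_trans; [|apply tsrc_eqv, IHk].
  assert (Hk : dim (Nat.iter k SrcP x) < n) by (rewrite dim_iter_tsrc; lia).
  apply (proj1 (IH _ Hk)); [apply iter_tsrc_wf, Hx|reflexivity].
Qed.

Lemma tmap_tgt_at_lt i x : WfP x -> dim x < n ->
  EqvQ (f (tgt_at (ptgt P) i x)) (tgt_at (ptgt Q) i (f x)).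
Proof.
  intros Hx Hn. unfold tgt_at. rewrite dim_tmap.
  induction (dim x - i) as [|k IHk]; [apply eqv_refl, tmap_wf_lt; assumption|].
  destruct (iter_ttgt_wf k x Hx) as [Wk Dk].
  rewrite !Nat.iter_succ. eapply eqv_trans; [|apply ttgt_eqv, IHk].
  assert (Hk : dim (Nat.iter k TgtP x) < n) by lia.
  apply (proj1 (IH _ Hk)); [exact Wk|reflexivity].
Qed.

Lemma tmap_src_at_step i a : WfP a -> dim a = n -> i < n ->
  EqvQ (f (SrcP a)) (SrcQ (f a)) ->
  EqvQ (f (src_at (psrc P) i a)) (src_at (psrc Q) i (f a)).
Proof.
  intros Ha Hn Hi Hs.
  rewrite <- (src_at_tsrc i a), <- (src_at_tsrc i (f a)) by (rewrite ?dim_tmap; lia).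
  eapply eqv_trans; [apply tmap_src_at_lt; [apply tsrc_wf, Ha|rewrite dim_tsrc; lia]|].
  apply src_at_eqv, Hs.
Qed.

Lemma tmap_tgt_at_step i a : WfP a -> WfQ (f a) -> dim a = n -> i < n ->
  EqvQ (f (TgtP a)) (TgtQ (f a)) ->
  EqvQ (f (tgt_at (ptgt P) i a)) (tgt_at (ptgt Q) i (f a)).
Proof.
  intros Ha Ha' Hn Hi Ht.
  assert (Wt : WfQ (f (TgtP a)))
    by (apply tmap_wf_lt; [apply ttgt_wf, Ha|rewrite dim_ttgt; auto; lia]).
  rewrite <- (tgt_at_ttgt i a), <- (tgt_at_ttgt i (f a)) by (rewrite ?dim_tmap; auto; lia).
  eapply eqv_trans; [apply tmap_tgt_at_lt; [apply ttgt_wf, Ha|rewrite dim_ttgt; auto; lia]|].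
  apply tgt_at_eqv; assumption.
Qed.

Section Composite.
Variables (i : nat) (a b : term (gens P)).
Hypotheses (Ha : WfP a) (Hb : WfP b) (Hda : dim a = n) (Hdb : dim b = n) (Hi : i < n).
Hypothesis (Hab : EqvP (tgt_at (ptgt P) i a) (src_at (psrc P) i b)).
Hypothesis (Ma : WfQ (f a) /\ EqvQ (f (SrcP a)) (SrcQ (f a)) /\ EqvQ (f (TgtP a)) (TgtQ (f a))).
Hypothesis (Mb : WfQ (f b) /\ EqvQ (f (SrcP b)) (SrcQ (f b)) /\ EqvQ (f (TgtP b)) (TgtQ (f b))).

Lemma tmap_tcomp_wf : WfQ (f (tcomp i a b)).
Proof.
  destruct Ma as (Wa & Sa & Ta), Mb as (Wb & Sb & Tb).
  cbn [tmap]. apply wf_comp; [exact Wa|exact Wb|rewrite !dim_tmap; lia|rewrite dim_tmap; lia|].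
  eapply eqv_trans; [apply eqv_sym, tmap_tgt_at_step; auto|].
  eapply eqv_trans; [|apply tmap_src_at_step; auto].
  apply tmap_eqv_lt; [exact Hab|]. rewrite dim_tgt_at by (auto; lia). exact Hi.
Qed.

Lemma tmap_tcomp_boundary :
  EqvQ (f (SrcP (tcomp i a b))) (SrcQ (f (tcomp i a b))) /\
  EqvQ (f (TgtP (tcomp i a b))) (TgtQ (f (tcomp i a b))).
Proof.
  assert (Hw : WfP (tcomp i a b)) by (apply wf_comp; auto; lia).
  assert (WS' := tsrc_wf _ tmap_tcomp_wf). assert (WT' := ttgt_wf _ tmap_tcomp_wf).
  assert (WS := tmap_wf_lt _ (tsrc_wf _ Hw) ltac:(rewrite dim_tsrc; cbn; lia)).
  assert (WT := tmap_wf_lt _ (ttgt_wf _ Hw) ltac:(rewrite dim_ttgt by exact Hw; cbn; lia)).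
  destruct Ma as (Wa & Sa & Ta), Mb as (Wb & Sb & Tb).
  cbn [tmap] in *.
  destruct (Nat.eq_dec (S i) n) as [E|E].
  - rewrite !tsrc_tcomp_top, !ttgt_tcomp_top by (rewrite ?dim_tmap; lia). auto.
  - rewrite !tsrc_tcomp_low, !ttgt_tcomp_low in * by (rewrite ?dim_tmap; lia).
    cbn [tmap] in *. split; apply eqv_comp; assumption.
Qed.

End Composite.

Lemma tmap_wf_step : tmap_wf_at n.
Proof.
  intros x Hx.
  induction Hx as [[|k] g|u Hu _|i a b Ha IHa Hb IHb Hd Hi He]; intros Hn; cbn [dim] in Hn.
  - cbn [tmap tsrc ttgt gbound]. split; [|split]; repeat constructor.
  - split; [constructor|split; [apply (pmap_src _ _ F)|apply (pmap_tgt _ _ F)]].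
  - assert (Wu := tmap_wf_lt u Hu ltac:(lia)).
    split; [apply wf_id, Wu|split; apply eqv_refl, Wu].
  - split; [apply tmap_tcomp_wf|apply tmap_tcomp_boundary]; auto; try lia; apply IHb; lia.
Qed.

Lemma tmap_unitl i a : WfP a -> i < dim a -> dim a = n ->
  EqvQ (f (tcomp i (idn (dim a - i) (src_at (psrc P) i a)) a)) (f a).
Proof.
  intros Ha Hi Hn. destruct (tmap_wf_step a Ha Hn) as (Wa & Sa & _).
  assert (Ex := tmap_src_at_step i a Ha Hn ltac:(lia) Sa).
  assert (Wx : WfQ (f (src_at (psrc P) i a)))
    by (apply tmap_wf_lt; [apply iter_tsrc_wf, Ha|rewrite dim_src_at; lia]).
  assert (Wy : WfQ (src_at (psrc Q) i (f a))) by apply iter_tsrc_wf, Wa.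
  assert (Da := dim_tmap (pmap F) a).
  assert (Dx : dim (f (src_at (psrc P) i a)) = i) by (rewrite dim_tmap, dim_src_at; lia).
  assert (Dy : dim (src_at (psrc Q) i (f a)) = i) by (rewrite dim_src_at; lia).
  cbn [tmap]. rewrite tmap_idn, <- (dim_tmap (pmap F) a).
  eapply eqv_trans; [|apply (eqv_unitl _ _ _ i); [exact Wa|rewrite dim_tmap; lia]].
  apply eqv_comp; [apply idn_eqv, Ex|apply eqv_refl, Wa| |];
    apply wf_unitl; auto using eqv_refl; lia.
Qed.

Lemma tmap_unitr i a : WfP a -> i < dim a -> dim a = n ->
  EqvQ (f (tcomp i a (idn (dim a - i) (tgt_at (ptgt P) i a)))) (f a).
Proof.
  intros Ha Hi Hn. destruct (tmap_wf_step a Ha Hn) as (Wa & _ & Ta).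
  assert (Ex := tmap_tgt_at_step i a Ha Wa Hn ltac:(lia) Ta).
  assert (Wx : WfQ (f (tgt_at (ptgt P) i a)))
    by (apply tmap_wf_lt; [apply iter_ttgt_wf, Ha|rewrite dim_tgt_at; auto; lia]).
  assert (Wy : WfQ (tgt_at (ptgt Q) i (f a))) by apply iter_ttgt_wf, Wa.
  assert (Da := dim_tmap (pmap F) a).
  assert (Dx : dim (f (tgt_at (ptgt P) i a)) = i) by (rewrite dim_tmap, dim_tgt_at; auto; lia).
  assert (Dy : dim (tgt_at (ptgt Q) i (f a)) = i) by (rewrite dim_tgt_at; auto; lia).
  cbn [tmap]. rewrite tmap_idn, <- (dim_tmap (pmap F) a).
  eapply eqv_trans; [|apply (eqv_unitr _ _ _ i); [exact Wa|rewrite dim_tmap; lia]].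
  apply eqv_comp; [apply eqv_refl, Wa|apply idn_eqv, Ex| |];
    apply wf_unitr; auto using eqv_refl, eqv_sym; lia.
Qed.

Lemma tmap_eqv_step : tmap_eqv_at n.
Proof.
  intros x y Hxy.
  induction Hxy as [u Hu|u v Huv IH1|u v w Huv IH1 _ IH2|u v Huv|
    i a a' b b' Haa' IHa _ IHb Hl Hr|i a b c Hw|i a Ha Hi|i a Ha Hi|i a b Hw];
    intros Hn; cbn [dim] in Hn; cbn [tmap].
  - apply eqv_refl, (tmap_wf_step u Hu Hn).
  - rewrite <- (eqv_dim _ _ Huv) in Hn. apply eqv_sym, IH1, Hn.
  - eapply eqv_trans; [apply IH1, Hn|apply IH2; rewrite <- (eqv_dim _ _ Huv); exact Hn].
  - apply eqv_id, tmap_eqv_lt; [exact Huv|lia].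
  - destruct (wf_tcomp_inv _ _ _ Hl) as (_ & _ & Hd & _).
    apply eqv_comp; [apply IHa, Hn|apply IHb; lia|apply (tmap_wf_step _ Hl Hn)|].
    apply (tmap_wf_step _ Hr). cbn [dim]. rewrite <- (eqv_dim _ _ Haa'). exact Hn.
  - apply eqv_assoc, (tmap_wf_step _ Hw Hn).
  - rewrite dim_idn, dim_src_at in Hn by lia. apply tmap_unitl; auto; lia.
  - apply tmap_unitr; assumption.
  - apply eqv_idcomp, (tmap_wf_lt _ Hw). cbn [dim]. lia.
Qed.

End MorphismStep.

Lemma tmap_wf_eqv_at n : tmap_wf_at n /\ tmap_eqv_at n.
Proof.
  induction n as [n IH] using lt_wf_ind.
  split; [apply tmap_wf_step|apply tmap_eqv_step]; exact IH.
Qed.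

Lemma tmap_tsrc x : WfP x -> EqvQ (f (SrcP x)) (SrcQ (f x)).
Proof. intros Hx. apply (proj1 (tmap_wf_eqv_at _) x Hx eq_refl). Qed.

Lemma tmap_eqv x y : EqvP x y -> EqvQ (f x) (f y).
Proof. intros Hxy. apply (proj2 (tmap_wf_eqv_at _) x y Hxy eq_refl). Qed.

End Morphism.

(** * Principal elements *)

Definition elt_src (X : elt) : elt :=
  Elt (epol X) (tsrc (psrc (epol X)) (ecell X)) (tsrc_wf _ (ecell_wf X)).

Lemma elt_hom_unit X Y F : elt_hom X Y F -> elt_hom (elt_unit X) (elt_unit Y) F.
Proof. apply eqv_id. Qed.

Lemma elt_hom_src_of_unit X Y F : elt_hom Y (elt_unit X) F -> elt_hom (elt_src Y) X F.
Proof.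
  intros Hom. unfold elt_hom in *. cbn.
  eapply eqv_trans; [apply tmap_tsrc, ecell_wf|exact (tsrc_eqv _ _ Hom)].
Qed.

Lemma ecell_eqv_unit_of_hom X Y F : elt_hom Y (elt_unit X) F ->
  ceq (epol Y) (ecell Y) (tid (tsrc (psrc (epol Y)) (ecell Y))).
Proof.
  intros Hom. apply eqv_tid_tsrc; [apply ecell_wf|].
  rewrite <- (is_identity_tmap (pmap F)), (is_identity_eqv _ _ Hom). reflexivity.
Qed.

Lemma elt_iso_unit_of_src X Y F : elt_iso (elt_src Y) X F ->
  ceq (epol Y) (ecell Y) (tid (tsrc (psrc (epol Y)) (ecell Y))) ->
  elt_iso Y (elt_unit X) F.
Proof.
  intros (G & HG & GF & FG) Ey. exists G. split; [|split; assumption].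
  eapply eqv_trans; [apply eqv_id, HG|apply eqv_sym, Ey].
Qed.

Lemma elt_iso_of_unit_eqv Y Q w hw v hv F : elt_iso (elt_unit Y) (Elt Q w hw) F ->
  ceq Q w (tid v) -> elt_iso Y (Elt Q v hv) F.
Proof.
  intros (G & HG & GF & FG) Ew. exists G. split; [|split; assumption].
  unfold elt_hom in *. cbn in *.
  eapply eqv_trans; [apply tmap_eqv, eqv_sym, (tsrc_eqv _ _ Ew)|].
  eapply eqv_trans; [apply tmap_tsrc, hw|exact (tsrc_eqv _ _ HG)].
Qed.

Lemma principal_unit X : principal X -> principal (elt_unit X).
Proof.
  intros HX Y F Hom Hmono.
  apply elt_iso_unit_of_src; [|exact (ecell_eqv_unit_of_hom _ _ _ Hom)].
  apply HX; [exact (elt_hom_src_of_unit _ _ _ Hom)|exact Hmono].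
Qed.

Lemma principal_of_eqv_unit Q w hw v hv : principal (Elt Q w hw) ->
  ceq Q w (tid v) -> principal (Elt Q v hv).
Proof.
  intros HW Ew Y F Hom Hmono. apply (elt_iso_of_unit_eqv _ _ _ hw); [|exact Ew].
  apply HW; [|exact Hmono].
  eapply eqv_trans; [apply eqv_id, Hom|apply eqv_sym, Ew].
Qed.

Theorem lemma5p1 (P : polygraph) (u : term (gens P)) (hu : cell P u) :
  polyplex (Elt P u hu) <-> polyplex (elt_unit (Elt P u hu)).
Proof.
  split; intros [Hpr Hprim].
  - split; [exact (principal_unit _ Hpr)|].
    intros [R y hy] F Hom HY.
    assert (Ey := ecell_eqv_unit_of_hom _ _ _ Hom).
    apply elt_iso_unit_of_src; [|exact Ey].
    apply Hprim; [exact (elt_hom_src_of_unit _ _ _ Hom)|].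
    exact (principal_of_eqv_unit R y hy _ _ HY Ey).
  - assert (Eu : ceq P (tid u) (tid u)) by apply eqv_refl, wf_id, hu.
    split; [exact (principal_of_eqv_unit P _ _ u hu Hpr Eu)|].
    intros Y F Hom HY. apply (elt_iso_of_unit_eqv _ _ _ (wf_id _ _ _ _ hu)); [|exact Eu].
    apply Hprim; [apply elt_hom_unit, Hom|apply principal_unit, HY].
Qed.
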